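(* The maps $\Psi,\Phi:\mathfrak{S}_n\to\mathfrak{S}_n$ are inverses of each other. Moreover, for every $\pi\in\mathfrak{S}_n$, $$\operatorname{Odd}(\pi)=\operatorname{Redge}(\Psi(\pi))\quad\text{and}\quad \operatorname{Redge}(\pi)=\operatorname{Odd}(\Phi(\pi)).$$
   Context: For $\pi\in\mathfrak{S}_n$ (a word $a_1\cdots a_n$) and $x\in[n]$, the $x$-factorization is $\pi=w_1w_2xw_4w_5$ where $w_2$ (resp. $w_4$) is the maximal contiguous subword immediately to the left (resp. right) of $x$ all of whose letters are smaller than $x$; set $\varphi_x(\pi)=w_1w_4xw_2w_5$. These $\varphi_x$ are commuting involutions. The decreasing binary tree of a word $w$ with distinct positive integer letters: empty if $w$ is empty; otherwise write $w=LmR$ with $m$ the greatest letter, the root is labeled $m$, its left subtree is the tree of $L$ and its right subtree the tree of $R$. For $x\in[n]$, $r_\pi(x)$ is the number of right edges on the path from the root to $x$ in the decreasing binary tree of $\pi$. $\operatorname{Odd}(\pi)=\{x\in[n]:r_\pi(x)\text{ odd}\}$, and $\operatorname{Redge}(\pi)$ is the set of vertices that are the lower ends of right edges in that tree. Define $\Psi(\pi)=\prod_{x\in\operatorname{Odd}(\pi)}\varphi_x(\pi)$ and $\Phi(\pi)=\prod_{x\in\operatorname{Redge}(\pi)}\varphi_x(\pi)$. *)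

From mathcomp Require Import all_boot.
Set Implicit Arguments. Unset Strict Implicit. Unset Printing Implicit Defensive.

(* Permutations of [n] = {1..n} are represented as words (seq nat) that are
   rearrangements of iota 1 n. *)
Definition is_perm_word (n : nat) (w : seq nat) : bool := perm_eq w (iota 1 n).

Definition small_prefix (x : nat) (s : seq nat) : seq nat :=
  take (find (fun y => x <= y) s) s.

(* x-factorization  w = w1 w2 x w4 w5  and  phi_x(w) = w1 w4 x w2 w5. *)
Definition phi (x : nat) (w : seq nat) : seq nat :=
  let i := index x w in
  let L := take i w in
  let R := drop i.+1 w in
  let w2 := rev (small_prefix x (rev L)) in
  let w1 := take (size L - size w2) L in
  let w4 := small_prefix x R in
  let w5 := drop (size w4) R in
  w1 ++ w4 ++ x :: w2 ++ w5.

Definition phi_prod (s : seq nat) (w : seq nat) : seq nat :=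
  foldr phi w s.

Inductive btree := Leaf | Node of btree & nat & btree.

Fixpoint dbt_fuel (k : nat) (w : seq nat) : btree :=
  match k with
  | 0 => Leaf
  | k'.+1 =>
    if w is [::] then Leaf else
    let m := foldr maxn 0 w in
    let i := index m w in
    Node (dbt_fuel k' (take i w)) m (dbt_fuel k' (drop i.+1 w))
  end.

(* Decreasing binary tree of a word (the fuel size w is sufficient). *)
Definition dbt (w : seq nat) : btree := dbt_fuel (size w) w.

Fixpoint tlabels (t : btree) : seq nat :=
  match t with Leaf => [::] | Node l m r => tlabels l ++ m :: tlabels r end.

Fixpoint rcount (t : btree) (x : nat) : nat :=
  match t with
  | Leaf => 0
  | Node l m r =>
    if m == x then 0
    else if x \in tlabels l then rcount l x else (rcount r x).+1
  end.

Fixpoint redges (t : btree) : seq nat :=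
  match t with
  | Leaf => [::]
  | Node l m r =>
    redges l ++ (if r is Node _ c _ then [:: c] else [::]) ++ redges r
  end.

Definition r_pi (w : seq nat) (x : nat) : nat := rcount (dbt w) x.

Definition Odd (w : seq nat) : seq nat := [seq x <- w | odd (r_pi w x)].

Definition Redge (w : seq nat) : seq nat := redges (dbt w).

Definition Psi (w : seq nat) : seq nat := phi_prod (Odd w) w.
Definition Phi (w : seq nat) : seq nat := phi_prod (Redge w) w.

From mathcomp Require Import all_boot.
From mathcomp Require Import zify.
Set Implicit Arguments. Unset Strict Implicit. Unset Printing Implicit Defensive.

(* A permutation is the in-order word of its decreasing binary tree T.  For a
   node x of a decreasing tree, phi_x exchanges the two subtrees of x and the
   result is again decreasing; so the product of the phi_x over a set S of
   nodes is the word of the tree T_S obtained by swapping the children of every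
   node of S, and the decreasing tree of that word is T_S itself.
   Swapping at p flips the side of the edges below p.  Swapping at the nodes
   with an odd number of right edges above them thus makes exactly these nodes
   right children: Redge(Psi pi) = Odd(pi).  Swapping at the right children,
   the new side of the edge above c is side(c) xor side(parent c), so along a
   path the parity of right edges telescopes to the side of its endpoint:
   Odd(Phi pi) = Redge(pi).  Swapping twice at the same set is the identity,
   hence Phi and Psi are mutually inverse. *)

Lemma uniq_pivot (T : eqType) (u v : seq T) m : uniq (u ++ m :: v) ->
  [/\ uniq u, uniq v, m \notin u, m \notin v & {in u, forall y, y \notin v}].
Proof.
rewrite cat_uniq /= => /and3P[uu /norP[mu /hasPn uv] /andP[mv vv]].
by split=> // y yu; apply/negP => /uv; rewrite yu.
Qed.

Fixpoint heap (t : btree) : bool :=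
  match t with
  | Leaf => true
  | Node l m r => [&& all (fun y => y < m) (tlabels l),
                      all (fun y => y < m) (tlabels r), heap l & heap r]
  end.

Definition troot (t : btree) : seq nat := if t is Node _ m _ then [:: m] else [::].

Lemma mem_tlabels_node l m r y :
  (y \in tlabels (Node l m r)) = [|| y \in tlabels l, y == m | y \in tlabels r].
Proof. by rewrite /= mem_cat inE. Qed.

Fixpoint tswap (P : pred nat) (t : btree) : btree :=
  match t with
  | Leaf => Leaf
  | Node l m r => if P m then Node (tswap P r) m (tswap P l)
                  else Node (tswap P l) m (tswap P r)
  end.

Lemma tswap_perm P t : perm_eq (tlabels (tswap P t)) (tlabels t).
Proof.
elim: t => [|l IHl m r IHr] //=; apply/permP => a.
case: (P m); rewrite /= !count_cat /= (permP IHl) (permP IHr) //.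
by rewrite addnCA [RHS]addnCA (addnC (count a _)).
Qed.

Lemma tswap_mem P t : tlabels (tswap P t) =i tlabels t.
Proof. exact: perm_mem (tswap_perm P t). Qed.

Lemma tswap_uniq P t : uniq (tlabels (tswap P t)) = uniq (tlabels t).
Proof. exact: perm_uniq (tswap_perm P t). Qed.

Lemma tswap_heap P t : heap t -> heap (tswap P t).
Proof.
elim: t => [|l IHl m r IHr] //= /and4P[al ar hl hr].
by case: (P m) => /=; rewrite !(eq_all_r (tswap_mem P _)) al ar IHl ?IHr.
Qed.

Lemma eq_in_tswap P Q t : {in tlabels t, P =1 Q} -> tswap P t = tswap Q t.
Proof.
elim: t => [|l IHl m r IHr] // PQ /=.
rewrite PQ ?mem_tlabels_node ?eqxx ?orbT // IHl => [|y yl]; last first.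
  by apply: PQ; rewrite mem_tlabels_node yl.
by rewrite IHr // => y yr; apply: PQ; rewrite mem_tlabels_node yr !orbT.
Qed.

Lemma tswap_id P t : {in tlabels t, P =1 pred0} -> tswap P t = t.
Proof.
by move/eq_in_tswap->; elim: t => [|l IHl m r IHr] //=; rewrite IHl IHr.
Qed.

Lemma tswap_comp P Q t : tswap Q (tswap P t) = tswap (fun y => P y (+) Q y) t.
Proof.
by elim: t => [|l IHl m r IHr] //=; case: (P m) => /=; case: (Q m); rewrite /= IHl IHr.
Qed.

Lemma tswapK P Q t : {in tlabels t, P =1 Q} -> tswap Q (tswap P t) = t.
Proof. by move=> PQ; rewrite tswap_comp tswap_id // => y /PQ /= ->; apply: addbb. Qed.

Lemma small_prefix_all x s : all (fun y => y < x) s -> small_prefix x s = s.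
Proof.
move=> lt_sx; rewrite /small_prefix hasNfind ?take_size //.
by apply/hasPn => y /(allP lt_sx); rewrite -ltnNge.
Qed.

Lemma small_prefix_wall x u y v : x <= y -> small_prefix x (u ++ y :: v) = small_prefix x u.
Proof.
move=> xy; rewrite /small_prefix find_cat; case: ifP => [has_u|/negbT hasN_u].
  by rewrite take_cat -has_find has_u.
by rewrite /= xy addn0 take_size_cat // hasNfind // take_size.
Qed.

Lemma size_small_prefix x s : size (small_prefix x s) <= size s.
Proof. by rewrite size_take_min geq_minr. Qed.

Lemma dropl_cat T n (s1 s2 : seq T) : n <= size s1 -> drop n (s1 ++ s2) = drop n s1 ++ s2.
Proof.
by move=> ns; rewrite -{1}(cat_take_drop n s1) -catA drop_size_cat // size_takel.
Qed.

Lemma phi_before_wall x u y v : x \in u -> x <= y ->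
  phi x (u ++ y :: v) = phi x u ++ y :: v.
Proof.
move=> xu xy; have iu : index x u < size u by rewrite index_mem.
rewrite /phi index_cat xu take_cat iu dropl_cat // small_prefix_wall //.
by rewrite dropl_cat ?size_small_prefix // -!catA /= -!catA.
Qed.

Lemma phi_after_wall x u y v : x \in u -> x \notin v -> x != y -> x <= y ->
  phi x (v ++ y :: u) = v ++ y :: phi x u.
Proof.
move=> xu xv xny xy; rewrite /phi index_cat (negbTE xv) /= eq_sym (negbTE xny).
rewrite -addnS take_cat drop_cat !ltnNge !leq_addr !addKn /=.
set T := take (index x u) u; set w2 := rev (small_prefix x (rev T)).
rewrite rev_pivot small_prefix_wall // -/w2.
have w2T : size w2 <= size T by rewrite size_rev -(size_rev T) size_small_prefix.
have -> : size (v ++ y :: T) - size w2 = size v + (size T - size w2).+1.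
  by rewrite size_cat /= -subSn // addnBA // leqW.
by rewrite take_cat ltnNge leq_addr addKn -catA.
Qed.

Lemma phi_swap_max m u v : all (fun y => y < m) u -> all (fun y => y < m) v ->
  phi m (u ++ m :: v) = v ++ m :: u.
Proof.
move=> lt_um lt_vm; have mu : m \notin u by apply/negP => /(allP lt_um); rewrite ltnn.
rewrite /phi index_cat (negbTE mu) /= eqxx addn0 take_size_cat //.
rewrite drop_cat ltnNge leqnSn subSnn /= drop0 small_prefix_all ?all_rev // revK.
by rewrite subnn take0 small_prefix_all // drop_size cats0.
Qed.

Lemma phi_tlabels x t : heap t -> uniq (tlabels t) -> x \in tlabels t ->
  phi x (tlabels t) = tlabels (tswap (pred1 x) t).
Proof.
elim: t => [|l IHl m r IHr] //= /and4P[lt_lm lt_rm hl hr] U.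
case/uniq_pivot: (U) => ul ur ml mr lr.
rewrite mem_cat inE => /or3P[xl|/eqP->|xr].
- have xm : x < m by apply: (allP lt_lm).
  rewrite (gtn_eqF xm) phi_before_wall ?IHl ?(ltnW xm) // (tswap_id (t := r)) // => y yr /=.
  by apply: contraNF (lr _ xl) => /eqP <-.
- rewrite eqxx phi_swap_max // !tswap_id // => y yt /=; apply/negbTE.
  + by rewrite neq_ltn (allP lt_lm).
  + by rewrite neq_ltn (allP lt_rm).
- have xm : x < m by apply: (allP lt_rm).
  have xl : x \notin tlabels l by apply: contraTN xr => /lr.
  rewrite (gtn_eqF xm) phi_after_wall ?IHr ?(ltnW xm) ?ltn_eqF //.
  rewrite (tswap_id (t := l)) // => y yl /=.
  by apply: contraNF xl => /eqP <-.
Qed.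

Lemma phi_prod_tlabels s t : heap t -> uniq (tlabels t) -> uniq s ->
  {subset s <= tlabels t} -> phi_prod s (tlabels t) = tlabels (tswap (mem s) t).
Proof.
move=> ht ut; elim: s => [|x s IH] /=; first by rewrite tswap_id.
case/andP=> xs us st; rewrite IH // => [|y ys]; last by apply: st; rewrite inE ys orbT.
rewrite phi_tlabels ?tswap_heap ?tswap_uniq ?tswap_mem ?st ?mem_head // tswap_comp.
congr tlabels; apply: eq_in_tswap => y _ /=; rewrite inE.
by have [->|] := eqVneq y x; rewrite ?(negbTE xs) ?addbF.
Qed.

Lemma max_mem (s : seq nat) : s != [::] -> foldr maxn 0 s \in s.
Proof.
elim: s => // a s IH _; rewrite inE [foldr _ _ _]/=.
have [->|s0] := eqVneq s [::]; first by rewrite maxn0 eqxx.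
by case: (leqP a (foldr maxn 0 s)); rewrite ?IH ?eqxx ?orbT.
Qed.

Lemma max_pivot m u v : all (fun y => y < m) u -> all (fun y => y < m) v ->
  foldr maxn 0 (u ++ m :: v) = m.
Proof.
move=> lt_um lt_vm; apply/eqP; rewrite foldrE eqn_leq; apply/andP; split.
  apply/bigmax_leqP_seq => y + _.
  by rewrite mem_cat inE => /or3P[/(allP lt_um)/ltnW|/eqP->|/(allP lt_vm)/ltnW].
by apply: (leq_bigmax_seq m) => //; rewrite mem_cat mem_head orbT.
Qed.

Lemma dbt_fuelS k w : w != [::] -> dbt_fuel k.+1 w =
  Node (dbt_fuel k (take (index (foldr maxn 0 w) w) w)) (foldr maxn 0 w)
       (dbt_fuel k (drop (index (foldr maxn 0 w) w).+1 w)).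
Proof. by case: w. Qed.

Lemma dbt_fuel_tlabels k t : heap t -> size (tlabels t) <= k -> dbt_fuel k (tlabels t) = t.
Proof.
elim: k t => [|k IH] [|l m r] //; first by rewrite /= size_cat addnS.
case/and4P=> lt_lm lt_rm hl hr.
rewrite [tlabels _]/= size_cat [size (_ :: _)]/= addnS ltnS => sz.
have ml : m \notin tlabels l by apply/negP => /(allP lt_lm); rewrite ltnn.
rewrite dbt_fuelS; last by case: (tlabels l).
rewrite max_pivot // index_cat (negbTE ml) /= eqxx addn0.
rewrite take_size_cat // drop_cat ltnNge leqnSn subSnn /= drop0.
by rewrite !IH // (leq_trans _ sz) ?leq_addl ?leq_addr.
Qed.

Lemma dbt_tlabels t : heap t -> dbt (tlabels t) = t.
Proof. by move=> ht; apply: dbt_fuel_tlabels. Qed.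

Lemma dbt_fuel_correct k w : uniq w -> size w <= k ->
  tlabels (dbt_fuel k w) = w /\ heap (dbt_fuel k w).
Proof.
elim: k w => [|k IH] w Uw Sw; first by case: w Uw Sw.
have [->|wn] := eqVneq w [::]; first by [].
rewrite dbt_fuelS //; set m := foldr maxn 0 w; set i := index m w.
have mw : m \in w by apply: max_mem.
have iw : i < size w by rewrite index_mem.
have Ew : take i w ++ m :: drop i.+1 w = w.
  by rewrite -[RHS](cat_take_drop i) (drop_nth 0 iw) nth_index.
have lt_m s : {subset s <= w} -> m \notin s -> all (fun y => y < m) s.
  move=> sw ms; apply/allP => y ys; rewrite ltn_neqAle; apply/andP; split.
    by apply: contraNneq ms => <-.
  by rewrite /m foldrE (leq_bigmax_seq y) ?sw.
move: Uw Sw; rewrite -{1 2}Ew size_cat /= addnS ltnS => /uniq_pivot[ut ud mt md _] sz.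
have [E1 H1] := IH _ ut (leq_trans (leq_addr _ _) sz).
have [E2 H2] := IH _ ud (leq_trans (leq_addl _ _) sz).
by rewrite /= E1 E2 H1 H2 !lt_m // => y; [apply: mem_drop | apply: mem_take].
Qed.

Lemma dbt_correct w : uniq w -> tlabels (dbt w) = w /\ heap (dbt w).
Proof. by move=> Uw; apply: dbt_fuel_correct. Qed.

Lemma redges_node l m r : redges (Node l m r) = redges l ++ troot r ++ redges r.
Proof. by []. Qed.

Lemma count_troot_redges t y :
  count_mem y (troot t ++ redges t) <= count_mem y (tlabels t).
Proof.
elim: t => [|l IHl m r IHr] //; move: IHl IHr.
rewrite redges_node /= !count_cat /=; case: l r => [|? ? ?] [|? ? ?] /=; lia.
Qed.

Lemma troot_redges_sub t : {subset troot t ++ redges t <= tlabels t}.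
Proof.
move=> y; rewrite -!has_pred1 !has_count => /leq_trans; apply; exact: count_troot_redges.
Qed.

Lemma redges_sub t : {subset redges t <= tlabels t}.
Proof. by move=> y yr; apply: troot_redges_sub; rewrite mem_cat yr orbT. Qed.

Lemma uniq_redges t : uniq (tlabels t) -> uniq (redges t).
Proof.
move=> U; apply: count_mem_uniq => y; have := count_troot_redges t y.
rewrite count_cat (count_uniq_mem _ U) => /(leq_trans (leq_addl _ _)).
rewrite -[y \in redges t]has_pred1 has_count.
by case: (count_mem y _) => [|[|k]] //; case: (y \in tlabels t).
Qed.

(* The flag [b] records whether [t] is itself a right subtree: [rparity] then
   counts the edge above the root, and [rchild] counts the root as a right child. *)
Definition rparity (b : bool) (t : btree) (y : nat) : bool := b (+) odd (rcount t y).
Definition rchild (b : bool) (t : btree) (y : nat) : bool :=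
  (y \in redges t) || b && (y \in troot t).

Section NodeLabels.

Variables (l : btree) (m : nat) (r : btree).
Hypothesis U : uniq (tlabels (Node l m r)).

Lemma rparity_root b : rparity b (Node l m r) m = b.
Proof. by rewrite /rparity /= eqxx addbF. Qed.

Lemma rparity_left b : {in tlabels l, rparity b (Node l m r) =1 rparity b l}.
Proof.
case/uniq_pivot: U => _ _ ml _ _ y yl.
have my : (m == y) = false by apply: contraNF ml => /eqP->.
by rewrite /rparity /= my yl.
Qed.

Lemma rparity_right b : {in tlabels r, rparity b (Node l m r) =1 rparity (~~ b) r}.
Proof.
case/uniq_pivot: U => _ _ _ mr lr y yr.
have yl : y \notin tlabels l by apply: contraTN yr => /lr.
have my : (m == y) = false by apply: contraNF mr => /eqP->.
by rewrite /rparity /= my (negbTE yl) oddS addbN addNb.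
Qed.

Lemma rchild_root b : rchild b (Node l m r) m = b.
Proof.
case/uniq_pivot: U => _ _ ml mr _.
have /negbTE ml' : m \notin redges l by apply: contra ml => /redges_sub.
have /negbTE mr' : m \notin troot r ++ redges r by apply: contra mr => /troot_redges_sub.
by rewrite /rchild redges_node mem_cat ml' mr' mem_head andbT.
Qed.

Lemma rchild_left b : {in tlabels l, rchild b (Node l m r) =1 rchild false l}.
Proof.
case/uniq_pivot: U => _ _ ml _ lr y yl.
have /negbTE yr : y \notin troot r ++ redges r.
  by apply: contra (lr _ yl) => /troot_redges_sub.
have /negbTE ym : y != m by apply: contraNneq ml => <-.
by rewrite /rchild redges_node mem_cat yr [troot _]/= inE ym andbF !orbF.
Qed.

Lemma rchild_right b : {in tlabels r, rchild b (Node l m r) =1 rchild true r}.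
Proof.
case/uniq_pivot: U => _ _ _ mr lr y yr.
have yl : y \notin tlabels l by apply: contraTN yr => /lr.
have /negbTE yl' : y \notin redges l by apply: contra yl => /redges_sub.
have /negbTE ym : y != m by apply: contraNneq mr => <-.
rewrite /rchild redges_node mem_cat yl' [troot _]/= inE ym andbF mem_cat.
by case: (y \in troot r); rewrite ?orbT ?orbF.
Qed.

End NodeLabels.

Lemma rchild_tswap_rparity P b t : uniq (tlabels t) ->
  {in tlabels t, P =1 rparity b t} -> {in tlabels t, P =1 rchild b (tswap P t)}.
Proof.
elim: t b => [|l IHl m r IHr] b // U HP.
have [Ul Ur _ _ _] := uniq_pivot U.
have Pm : P m = b by rewrite -[RHS](rparity_root l m r) HP // mem_tlabels_node eqxx orbT.
have HPl : {in tlabels l, P =1 rparity b l}.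
  by move=> y yl; rewrite -(rparity_left U) //; apply: HP; rewrite mem_tlabels_node yl.
have HPr : {in tlabels r, P =1 rparity (~~ b) r}.
  move=> y yr; rewrite -(rparity_right U) //.
  by apply: HP; rewrite mem_tlabels_node yr !orbT.
have Us : uniq (tlabels (tswap P (Node l m r))) by rewrite tswap_uniq.
rewrite [tswap P _]/= Pm in Us *.
move=> y; rewrite mem_tlabels_node => /or3P[yl|/eqP->|yr].
- rewrite (IHl b) //; case: b {HP Pm HPl HPr} Us => Us.
  + by rewrite (rchild_right Us) ?tswap_mem.
  + by rewrite (rchild_left Us) ?tswap_mem.
- by rewrite Pm; case: b {HP Pm HPl HPr} Us => Us; rewrite (rchild_root Us).
- rewrite (IHr (~~ b)) //; case: b {HP Pm HPl HPr} Us => Us.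
  + by rewrite (rchild_left Us) ?tswap_mem.
  + by rewrite (rchild_right Us) ?tswap_mem.
Qed.

Lemma rparity_tswap_rchild P b t : uniq (tlabels t) ->
  {in tlabels t, P =1 rchild b t} -> {in tlabels t, P =1 rparity b (tswap P t)}.
Proof.
elim: t b => [|l IHl m r IHr] b // U HP.
have [Ul Ur _ _ _] := uniq_pivot U.
have Pm : P m = b by rewrite -[RHS](rchild_root U) HP // mem_tlabels_node eqxx orbT.
have HPl : {in tlabels l, P =1 rchild false l}.
  by move=> y yl; rewrite -(rchild_left U b) //; apply: HP; rewrite mem_tlabels_node yl.
have HPr : {in tlabels r, P =1 rchild true r}.
  move=> y yr; rewrite -(rchild_right U b) //.
  by apply: HP; rewrite mem_tlabels_node yr !orbT.
have Us : uniq (tlabels (tswap P (Node l m r))) by rewrite tswap_uniq.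
rewrite [tswap P _]/= Pm in Us *.
move=> y; rewrite mem_tlabels_node => /or3P[yl|/eqP->|yr].
- rewrite (IHl false) //; case: b {HP Pm HPl HPr} Us => Us.
  + by rewrite (rparity_right Us) ?tswap_mem.
  + by rewrite (rparity_left Us) ?tswap_mem.
- by rewrite Pm; case: b {HP Pm HPl HPr} Us => Us; rewrite rparity_root.
- rewrite (IHr true) //; case: b {HP Pm HPl HPr} Us => Us.
  + by rewrite (rparity_left Us) ?tswap_mem.
  + by rewrite (rparity_right Us) ?tswap_mem.
Qed.

Definition odd_nodes (t : btree) : seq nat := [seq y <- tlabels t | odd (rcount t y)].
Definition Psi_tree (t : btree) : btree := tswap (mem (odd_nodes t)) t.
Definition Phi_tree (t : btree) : btree := tswap (mem (redges t)) t.

Lemma Odd_tlabels t : heap t -> Odd (tlabels t) = odd_nodes t.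
Proof. by move=> ht; rewrite /Odd /r_pi dbt_tlabels. Qed.

Lemma Redge_tlabels t : heap t -> Redge (tlabels t) = redges t.
Proof. by move=> ht; rewrite /Redge dbt_tlabels. Qed.

Lemma Psi_tlabels t : heap t -> uniq (tlabels t) -> Psi (tlabels t) = tlabels (Psi_tree t).
Proof.
move=> ht U; rewrite /Psi Odd_tlabels // phi_prod_tlabels ?filter_uniq //.
by move=> y; rewrite mem_filter => /andP[].
Qed.

Lemma Phi_tlabels t : heap t -> uniq (tlabels t) -> Phi (tlabels t) = tlabels (Phi_tree t).
Proof.
move=> ht U; rewrite /Phi Redge_tlabels // phi_prod_tlabels ?uniq_redges //.
exact: redges_sub.
Qed.

Lemma redges_Psi_tree t : uniq (tlabels t) -> redges (Psi_tree t) =i odd_nodes t.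
Proof.
move=> U y; have [yt|yt] := boolP (y \in tlabels t).
  rewrite [RHS](@rchild_tswap_rparity (mem (odd_nodes t)) false t) //.
    by rewrite /rchild orbF.
  by move=> z zt; rewrite -[LHS]/(z \in odd_nodes t) mem_filter zt andbT.
rewrite mem_filter (negbTE yt) andbF; apply: contraNF yt => /redges_sub.
by rewrite tswap_mem.
Qed.

Lemma odd_nodes_Phi_tree t : uniq (tlabels t) -> odd_nodes (Phi_tree t) =i redges t.
Proof.
move=> U y; rewrite mem_filter tswap_mem; have [yt|yt] := boolP (y \in tlabels t).
  rewrite andbT [RHS](@rparity_tswap_rchild (mem (redges t)) false t) //.
  by move=> z _; rewrite /rchild orbF.
by rewrite andbF; apply/esym/negbTE; apply: contra yt; apply: redges_sub.
Qed.

Lemma Psi_treeK t : uniq (tlabels t) -> Phi_tree (Psi_tree t) = t.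
Proof. by move=> U; apply: tswapK => y _ /=; rewrite redges_Psi_tree. Qed.

Lemma Phi_treeK t : uniq (tlabels t) -> Psi_tree (Phi_tree t) = t.
Proof. by move=> U; apply: tswapK => y _ /=; rewrite odd_nodes_Phi_tree. Qed.

Theorem theorem7p1 (n : nat) (w : seq nat) :
  is_perm_word n w ->
  [/\ is_perm_word n (Psi w), is_perm_word n (Phi w),
      Phi (Psi w) = w, Psi (Phi w) = w &
      (Odd w =i Redge (Psi w)) /\ (Redge w =i Odd (Phi w))].
Proof.
move=> Pw; have Uw : uniq w by rewrite (perm_uniq Pw) iota_uniq.
have [Ew Ht] := dbt_correct Uw; set t := dbt w in Ew Ht.
have Ut : uniq (tlabels t) by rewrite Ew.
have perm_tswap P : is_perm_word n (tlabels (tswap P t)).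
  by rewrite /is_perm_word (perm_trans (tswap_perm P t)) ?Ew.
have [Ht1 Ut1] : heap (Psi_tree t) /\ uniq (tlabels (Psi_tree t)).
  by rewrite tswap_heap ?tswap_uniq.
have [Ht2 Ut2] : heap (Phi_tree t) /\ uniq (tlabels (Phi_tree t)).
  by rewrite tswap_heap ?tswap_uniq.
rewrite -Ew Psi_tlabels // Phi_tlabels // Phi_tlabels // Psi_tlabels //.
rewrite Psi_treeK // Phi_treeK // !Odd_tlabels // !Redge_tlabels //.
split=> //; try exact: perm_tswap.
by split=> y; rewrite ?redges_Psi_tree ?odd_nodes_Phi_tree.
Qed.
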